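(* Let $m$ be even, $\mathcal{M}$ a set of $m$ items, and let $H=(\mathcal{M},E)$ be an $m/2$-uniform hypergraph such that for every $S\subseteq\mathcal{M}$ with $|S|=m/2$ exactly one of $S$ and $\mathcal{M}\setminus S$ belongs to $E$. Then there exists a monotone submodular valuation function $v':2^{\mathcal{M}}\to\mathbb{R}_{\ge 0}$ with $v'(S)\ne v'(\mathcal{M}\setminus S)$ for all $|S|=m/2$ such that $H^{v'}=H$.
   Context: For a valuation $v$ with $v(S)\neq v(\mathcal{M}\setminus S)$ whenever $|S|=m/2$, the hypergraph $H^{v}=(\mathcal{M},E_v)$ has edge set $E_v=\{S\subset\mathcal{M}:|S|=m/2,\ v(S)>v(\mathcal{M}\setminus S)\}$. A set function $v$ is monotone if $S\subseteq T$ implies $v(S)\le v(T)$, and submodular if $v(S\cup\{g\})-v(S)\ge v(T\cup\{g\})-v(T)$ for all $S\subseteq T$ and $g\notin T$. *)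

From mathcomp Require Import all_boot all_order all_algebra.
Set Implicit Arguments. Unset Strict Implicit. Unset Printing Implicit Defensive.
Import Order.TTheory GRing.Theory Num.Theory.
Local Open Scope ring_scope.

(* Items: a finite type T, so M = [set: T], m = #|T|. *)

Definition monotone_val (T : finType) (R : numDomainType) (v : {set T} -> R) :=
  forall S U : {set T}, S \subset U -> v S <= v U.

Definition submodular_val (T : finType) (R : numDomainType) (v : {set T} -> R) :=
  forall (S U : {set T}) (g : T), S \subset U -> g \notin U ->
    v (g |: U) - v U <= v (g |: S) - v S.

Definition balanced_distinct (T : finType) (R : numDomainType) (v : {set T} -> R) :=
  forall S : {set T}, (#|S| * 2 = #|T|)%N -> v S != v (~: S).

Definition hyper_of (T : finType) (R : numDomainType) (v : {set T} -> R)
  : {set {set T}} :=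
  [set S : {set T} | ((#|S| * 2 == #|T|)%N) && (v (~: S) < v S)].

From mathcomp Require Import all_boot all_order all_algebra.
From mathcomp Require Import zify.
Set Implicit Arguments. Unset Strict Implicit. Unset Printing Implicit Defensive.
Import Order.TTheory GRing.Theory Num.Theory.
Local Open Scope ring_scope.

(* Let m = #|T|.  The cardinality function
     quad n = n * (2m - n)
   is strictly increasing on [0, m] with increments 2(m - n) - 1 >= 1 that
   drop by exactly 2 at each step.  Adding a 0/1 "tie-breaker" b(S) to a
   cardinality function with these two margins cannot destroy monotonicity
   (which needs a margin of 1) nor submodularity (two marginals are perturbed
   by at most 1 each, so a margin of 2 suffices).  Taking b(S) = [S \in E],
   the valuation v(S) = quad |S| + [S \in E] is nonnegative, monotone and
   submodular; on sets of size m/2 the complement has the same size, so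
   v(S) and v(~S) differ exactly by the tie-breaker, and the hypothesis that
   exactly one of S, ~S lies in E gives both v(S) <> v(~S) and H^v = E. *)

Section QuadraticProfile.
Local Open Scope nat_scope.
Variable m : nat.

Definition quad (n : nat) : nat := n * (2 * m - n).

Lemma quad_succ n : n < m -> quad n.+1 + 2 * n + 1 = quad n + 2 * m.
Proof.
move=> lt_nm; rewrite /quad.
have -> : 2 * m - n = (2 * m - n.+1).+1 by lia.
nia.
Qed.

Lemma quad_incr s u : s < u <= m -> quad s + 1 <= quad u.
Proof.
case/andP=> lt_su le_um; rewrite /quad.
have -> : 2 * m - s = (m - u) + (u - s) + m by lia.
have -> : 2 * m - u = (m - u) + m by lia.
have -> : u = s + (u - s) by lia.
have : 0 < u - s by lia.
nia.
Qed.

Lemma quad_concave s u : s < u < m -> quad u.+1 + quad s + 2 <= quad s.+1 + quad u.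
Proof.
case/andP=> lt_su lt_um.
have := quad_succ lt_um; have := quad_succ (ltn_trans lt_su lt_um).
lia.
Qed.

End QuadraticProfile.

Lemma card_lt_of_subset (T : finType) (S U : {set T}) :
  S \subset U -> S != U -> (#|S| < #|U|)%N.
Proof.
move=> sSU neqSU; have [le_card eq_card] := subset_leqif_cards sSU.
by rewrite ltn_neqAle le_card andbT eq_card.
Qed.

Section PerturbedCardinality.
Variables (T : finType) (R : numDomainType).
Variables (f : nat -> nat) (b : {set T} -> bool).

Definition perturbed (S : {set T}) : R := (f #|S| + b S)%:R.

Hypothesis f_incr : forall s u, (s < u <= #|T|)%N -> (f s + 1 <= f u)%N.
Hypothesis f_concave :
  forall s u, (s < u < #|T|)%N -> (f u.+1 + f s + 2 <= f s.+1 + f u)%N.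

(* A size margin of 1 absorbs the change of the tie-breaker. *)
Lemma perturbed_monotone : monotone_val perturbed.
Proof.
move=> S U sSU; rewrite ler_nat.
have [->|neqSU] := eqVneq S U; first by [].
have lt_SU := card_lt_of_subset sSU neqSU.
have := f_incr (introT andP (conj lt_SU (max_card (mem U)))).
by case: (b S); case: (b U); lia.
Qed.

(* Each marginal moves by at most 1, within the concavity margin of 2. *)
Lemma perturbed_submodular : submodular_val perturbed.
Proof.
move=> S U g sSU gNU.
rewrite lerBlDr addrAC lerBrDr -!natrD ler_nat.
have gNS : g \notin S by apply: contra gNU; apply: subsetP.
have le_gU : (#|U|.+1 <= #|T|)%N.
  by have := max_card (mem (g |: U)); rewrite cardsU1 gNU.
rewrite !cardsU1 gNU gNS !add1n.
have [->|neqSU] := eqVneq S U; first by lia.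
have lt_SU := card_lt_of_subset sSU neqSU.
have := f_concave (introT andP (conj lt_SU le_gU)).
by case: (b _); case: (b _); case: (b _); case: (b _); lia.
Qed.

End PerturbedCardinality.

Lemma card_setC_half (T : finType) (S : {set T}) :
  (#|S| * 2 = #|T|)%N -> #|~: S| = #|S|.
Proof. by move=> hS; have := cardsC S; lia. Qed.

Theorem mainTheorem5 (R : realFieldType) (T : finType) (E : {set {set T}}) :
  ~~ odd #|T| ->
  (forall S : {set T}, S \in E -> (#|S| * 2 = #|T|)%N) ->
  (forall S : {set T}, (#|S| * 2 = #|T|)%N ->
     (S \in E) (+) (~: S \in E)) ->
  exists v : {set T} -> R,
    [/\ forall S, 0 <= v S,
        monotone_val v,
        submodular_val v,
        balanced_distinct v
      & hyper_of v = E].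
Proof.
move=> _ E_half E_xor.
pose v := perturbed R (quad #|T|) (fun S => S \in E).
exists v; split.
- by move=> S; rewrite ler0n.
- by apply: perturbed_monotone; exact: quad_incr.
- by apply: perturbed_submodular; exact: quad_concave.
- move=> S hS; rewrite /v /perturbed eqr_nat card_setC_half // eqn_add2l.
  by have := E_xor S hS; case: (S \in E); case: (~: S \in E).
- apply/setP=> S; rewrite inE /v /perturbed ltr_nat.
  have [SE|SNE] := boolP (S \in E).
  + have hS := E_half S SE; have := E_xor S hS.
    by rewrite SE card_setC_half // hS eqxx => /negbTE ->; rewrite ltn_add2l.
  + have [hS|] := eqVneq (#|S| * 2)%N #|T|; last by [].
    have := E_xor S hS; rewrite (negbTE SNE) card_setC_half //= => ->.
    by rewrite ltn_add2l.
Qed.
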